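(* Let $A,B,C$ be distinct letters in an $\alpha$-alphabet $\mathcal A$ and let $x,y,z,t$ be words in the alphabet $\mathcal A\setminus\{A,B,C\}$ such that $xyzt$ is a Gauss word in this alphabet. Then (i) $(\mathcal A,xAByCAzBCt)\simeq_S(\mathcal A,xBAyACzCBt)$ if $(|A|,\tau(|B|),|C|)\in S$; (ii) $(\mathcal A,xAByCAzCBt)\simeq_S(\mathcal A,xBAyACzBCt)$ if $(\tau(|A|),\tau(|B|),|C|)\in S$; (iii) $(\mathcal A,xAByACzCBt)\simeq_S(\mathcal A,xBAyCAzBCt)$ if $(|A|,\tau(|B|),\tau(|C|))\in S$.
   Context: Fix a set $\alpha$ with an involution $\tau$ and an arbitrary subset $S\subset\alpha\times\alpha\times\alpha$. An $\alpha$-alphabet is a set $\mathcal A$ with a map $A\mapsto|A|\in\alpha$. A Gauss word in a finite alphabet is a word in which each letter of the alphabet occurs exactly twice. A nanoword over $\alpha$ is a pair $(\mathcal A,w)$ with $\mathcal A$ a finite $\alpha$-alphabet and $w$ a Gauss word in $\mathcal A$. Nanowords are isomorphic if a bijection of alphabets preserving $|\cdot|$ carries one word letterwise to the other. $S$-homotopy moves ($x,y,z,t$ words in the remaining letters; smaller alphabets carry the restricted projection): (1) $(\mathcal A,xAAy)\mapsto(\mathcal A\setminus\{A\},xy)$; (2) $(\mathcal A,xAByBAz)\mapsto(\mathcal A\setminus\{A,B\},xyz)$ if $|B|=\tau(|A|)$; (3) $(\mathcal A,xAByACzBCt)\mapsto(\mathcal A,xBAyCAzCBt)$ if $A,B,C$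 are distinct and $(|A|,|B|,|C|)\in S$. $S$-homotopy $\simeq_S$ is the equivalence relation generated by isomorphisms, these moves and their inverses. *)

From mathcomp Require Import all_boot.
From Stdlib Require Import Relations.

Set Implicit Arguments. Unset Strict Implicit. Unset Printing Implicit Defensive.

Unset Implicit Arguments.
Record nanoword (alpha : Type) := Nanoword {
  nw_alph : finType;
  nw_proj : nw_alph -> alpha;
  nw_word : seq nw_alph }.
Arguments nw_alph {alpha}.
Arguments nw_proj {alpha} n _.
Arguments nw_word {alpha}.
Arguments Nanoword {alpha nw_alph}.
Set Implicit Arguments.

Definition gauss_word (T : finType) (w : seq T) : Prop :=
  forall a : T, count_mem a w = 2.

Definition cast_letter (T U : finType) (e : T = U) (c : T) : U :=
  match e in _ = U return U with erefl => c end.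

Section Moves.
Variables (alpha : Type) (tau : alpha -> alpha) (S : alpha -> alpha -> alpha -> Prop).

Definition nw_iso (u v : nanoword alpha) : Prop :=
  exists f : nw_alph u -> nw_alph v, bijective f /\
    (forall a, nw_proj v (f a) = nw_proj u a) /\
    map f (nw_word u) = nw_word v.

(* Move (1), up to isomorphism of the result: (A, xAAy) -> (A \ {A}, xy).
   The smaller alphabet is identified with A \ {A} via an injection f whose
   image is exactly A \ {A}, and which preserves projections. *)
Definition move1 (u v : nanoword alpha) : Prop :=
  exists (A : nw_alph u) (x y : seq (nw_alph v)) (f : nw_alph v -> nw_alph u),
    [/\ [/\ injective f, (forall b, b != A -> exists c, f c = b) & (forall c, f c != A)],
        (forall c, nw_proj u (f c) = nw_proj v c),
        nw_word u = map f x ++ [:: A; A] ++ map f y &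
        nw_word v = x ++ y].

(* Move (2): (A, xAByBAz) -> (A \ {A,B}, xyz) if |B| = tau |A| (A, B distinct). *)
Definition move2 (u v : nanoword alpha) : Prop :=
  exists (A B : nw_alph u) (x y z : seq (nw_alph v)) (f : nw_alph v -> nw_alph u),
    [/\ A != B /\ nw_proj u B = tau (nw_proj u A),
        [/\ injective f, (forall b, b != A -> b != B -> exists c, f c = b)
           & (forall c, f c != A /\ f c != B)],
        (forall c, nw_proj u (f c) = nw_proj v c),
        nw_word u = map f x ++ [:: A; B] ++ map f y ++ [:: B; A] ++ map f z &
        nw_word v = x ++ y ++ z].

(* Move (3): (A, xAByACzBCt) -> (A, xBAyCAzCBt) if A,B,C distinct and
   (|A|,|B|,|C|) in S (same alphabet). *)
Definition move3 (u v : nanoword alpha) : Prop :=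
  exists (e : nw_alph v = nw_alph u) (A B C : nw_alph u) (x y z t : seq (nw_alph u)),
    [/\ [/\ A != B, A != C & B != C], S (nw_proj u A) (nw_proj u B) (nw_proj u C),
        (forall c, nw_proj v c = nw_proj u (cast_letter e c)),
        nw_word u = x ++ [:: A; B] ++ y ++ [:: A; C] ++ z ++ [:: B; C] ++ t &
        map (cast_letter e) (nw_word v) = x ++ [:: B; A] ++ y ++ [:: C; A] ++ z ++ [:: C; B] ++ t].

Definition hstep (u v : nanoword alpha) : Prop :=
  nw_iso u v \/ move1 u v \/ move2 u v \/ move3 u v.

Definition is_nanoword (u : nanoword alpha) : Prop := gauss_word (nw_word u).

Definition hstep_nw (u v : nanoword alpha) : Prop :=
  [/\ is_nanoword u, is_nanoword v & hstep u v].

Definition S_homotopic : relation (nanoword alpha) :=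
  clos_refl_sym_trans _ hstep_nw.

End Moves.

From mathcomp Require Import all_boot zify.
From Stdlib Require Import Relations.

(* Each variant of move (3) is obtained by conjugating a known one with moves (2).
   For (i), a pair D E with |D| = |B| and |E| = tau |B| is inserted around the
   block A B ... B C; move (3) then applies to A, E, C, after which E cancels
   against B and D takes the place of B.  Variants (ii) and (iii) follow in the
   same way from (i), flipping the sign of A, resp. of C.  The inserted letters
   are inr false and inr true in the alphabet L + bool.  Moves (2) and (3)
   preserve the Gauss property in both directions, so it propagates along these
   chains. *)

Set Implicit Arguments.
Unset Strict Implicit.

Lemma count_mem_map_inj (T U : eqType) (f : T -> U) (s : seq T) (c : T) :
  injective f -> count_mem (f c) (map f s) = count_mem c s.
Proof. by move=> f_inj; rewrite count_map; apply: eq_count => d /=; rewrite inj_eq. Qed.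

Lemma gauss_word_notin (T : finType) (w s : seq T) (a : T) :
  gauss_word w -> count_mem a s + 2 <= count_mem a w -> a \notin s.
Proof. by move=> g; rewrite g => le_s; apply/count_memPn; lia. Qed.

Lemma gauss_word_swap3 (T : finType) (a b c d e f : T) (x y z t : seq T) :
  gauss_word (x ++ [:: a; b] ++ y ++ [:: c; d] ++ z ++ [:: e; f] ++ t) ->
  gauss_word (x ++ [:: b; a] ++ y ++ [:: d; c] ++ z ++ [:: f; e] ++ t).
Proof. by move=> g u; rewrite -(g u) !count_cat /=; lia. Qed.

Lemma gauss_word_chords (T : finType) (A B C : T) (w u : seq T) :
  [/\ A != B, A != C & B != C] ->
  (forall c, c \in w -> [/\ c != A, c != B & c != C]) ->
  (forall c, c != A -> c != B -> c != C -> count_mem c w = 2) ->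
  (forall c, count_mem c u = count_mem c w + count_mem c [:: A; A; B; B; C; C]) ->
  gauss_word u.
Proof.
move=> [AB AC BC] w_ABC w_gauss u_count c; rewrite u_count.
have [cABC | ] := boolP (c \in [:: A; B; C]); last first.
  rewrite !inE !negb_or => /and3P[cA cB cC].
  by rewrite w_gauss //= !(eq_sym _ c) (negbTE cA) (negbTE cB) (negbTE cC).
have -> : count_mem c w = 0.
  apply/count_memPn/negP => /w_ABC[cA cB cC].
  by move: cABC; rewrite !inE (negbTE cA) (negbTE cB) (negbTE cC).
by move: cABC; rewrite !inE => /or3P[]/eqP->;
  rewrite /= eqxx ?(eq_sym B) ?(eq_sym C) ?(negbTE AB) ?(negbTE AC) ?(negbTE BC).
Qed.

Section Homotopy.

Variables (alpha : Type) (tau : alpha -> alpha) (S : alpha -> alpha -> alpha -> Prop).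
Hypothesis tauK : involutive tau.

Local Notation homotopic := (S_homotopic tau S).

Lemma move2_gauss (u v : nanoword alpha) :
  move2 tau u v -> is_nanoword u <-> is_nanoword v.
Proof.
case=> P [Q] [x] [y] [z] [f] [[PQ _] [f_inj f_onto f_new] _ uw vw].
rewrite /is_nanoword uw vw.
set w := map f x ++ _.
have f_newP c : f c \notin [:: P; Q].
  by have [fP fQ] := f_new c; rewrite !inE negb_or fP fQ.
have count_f c : count_mem (f c) w = count_mem c (x ++ y ++ z).
  have [fP fQ] := f_new c.
  by rewrite !count_cat !count_mem_map_inj //= !(eq_sym _ (f c)) (negbTE fP) (negbTE fQ).
have count_new a : a \in [:: P; Q] -> count_mem a w = 2.
  move=> a_PQ; have notin_f s : count_mem a (map f s) = 0.
    by apply/count_memPn/negP => /mapP[c _ ac]; move: (f_newP c); rewrite -ac a_PQ.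
  move: a_PQ; rewrite !count_cat !notin_f !inE => /orP[]/eqP->;
    by rewrite /= eqxx ?(eq_sym Q) (negbTE PQ).
split=> g a.
- by rewrite -count_f.
- have [|] := boolP (a \in [:: P; Q]); first exact: count_new.
  rewrite !inE negb_or => /andP[aP aQ].
  by have [c <-] := f_onto a aP aQ; rewrite count_f.
Qed.

Lemma homotopic_nanoword (u v : nanoword alpha) :
  homotopic u v -> is_nanoword u <-> is_nanoword v.
Proof.
elim=> [{}u {}v [gu gv _] | {}u | {}u {}v _ IH | {}u {}v w _ IHuv _ IHvw] //.
- by rewrite IH.
- by rewrite IHuv.
Qed.

Lemma move2_homotopic (u v : nanoword alpha) :
  move2 tau u v -> is_nanoword v -> homotopic u v.
Proof.
move=> m2 gv; apply: rst_step; split=> //; last by right; right; left.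
by rewrite (move2_gauss m2).
Qed.

Lemma move3_homotopic (T : finType) (pr : T -> alpha) (P Q R : T) (x y z t : seq T) :
  [/\ P != Q, P != R & Q != R] -> S (pr P) (pr Q) (pr R) ->
  gauss_word (x ++ [:: Q; P] ++ y ++ [:: R; P] ++ z ++ [:: R; Q] ++ t) ->
  homotopic (Nanoword pr (x ++ [:: P; Q] ++ y ++ [:: P; R] ++ z ++ [:: Q; R] ++ t))
            (Nanoword pr (x ++ [:: Q; P] ++ y ++ [:: R; P] ++ z ++ [:: R; Q] ++ t)).
Proof.
move=> PQR hS gv; apply: rst_step; split=> //; first exact: gauss_word_swap3 gv.
by right; right; right; exists erefl, P, Q, R, x, y, z, t; rewrite /= map_id.
Qed.

Section PairExtension.

Variables (L : finType) (proj : L -> alpha) (p : alpha).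

Definition ext_proj (c : L + bool) : alpha :=
  match c with inl c => proj c | inr false => p | inr true => tau p end.

Definition relabel (b : L) (k : bool) (c : L) : L + bool :=
  if c == b then inr k else inl c.

Lemma relabel_inj b k : injective (relabel b k).
Proof.
rewrite /relabel => c1 c2.
by have [->|c1b] := eqVneq c1 b; have [->|c2b] := eqVneq c2 b => // -[].
Qed.

Lemma map_relabel b k (s : seq L) : b \notin s -> map (relabel b k) s = map inl s.
Proof.
move=> bs; apply/eq_in_map => c cs; rewrite /relabel ifN //.
by apply: contraNneq bs => <-.
Qed.

Lemma move2_insert_pair (x y z : seq L) :
  move2 tau (Nanoword ext_proj (map inl x ++ [:: inr false; inr true] ++ map inl y
                                 ++ [:: inr true; inr false] ++ map inl z))
            (Nanoword proj (x ++ y ++ z)).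
Proof.
exists (inr false), (inr true), x, y, z, inl; split=> //.
by split=> [c1 c2 [] // | [c|[]] // _ _ | //]; exists c.
Qed.

Lemma move2_remove_pair (b : L) (k : bool) (P Q : L + bool) (x y z : seq L) :
  perm_eq [:: P; Q] [:: inl b; inr (~~ k)] ->
  ext_proj Q = tau (ext_proj P) -> ext_proj (inr k) = proj b ->
  move2 tau (Nanoword ext_proj (map (relabel b k) x ++ [:: P; Q] ++ map (relabel b k) y
                                 ++ [:: Q; P] ++ map (relabel b k) z))
            (Nanoword proj (x ++ y ++ z)).
Proof.
move=> PQ_new hPQ hk; have mem_new := perm_mem PQ_new.
have PQ : P != Q by have := perm_uniq PQ_new; rewrite /= !inE andbT => ->.
exists P, Q, x, y, z, (relabel b k); split=> //.
- split; first exact: relabel_inj.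
  + move=> a aP aQ; have : a \notin [:: P; Q] by rewrite !inE negb_or aP aQ.
    rewrite mem_new !inE negb_or; clear aP aQ.
    case: a => [c /andP[cb _] | j /andP[_ jk]].
      by exists c; rewrite /relabel ifN.
    by exists b; rewrite /relabel eqxx; move: jk; case: j; case: (k).
  + move=> c; have : relabel b k c \notin [:: P; Q].
      rewrite mem_new /relabel; case: eqVneq => [_|cb]; rewrite !inE /= ?orbF //.
      by case: (k).
    by rewrite !inE negb_or => /andP[].
- by move=> c; rewrite /relabel; case: eqP => [->|].
Qed.

End PairExtension.

Lemma move3_tauB_homotopic (L : finType) (proj : L -> alpha) (A B C : L) (x y z t : seq L) :
  [/\ A != B, A != C & B != C] -> S (proj A) (tau (proj B)) (proj C) ->
  gauss_word (x ++ [:: A; B] ++ y ++ [:: C; A] ++ z ++ [:: B; C] ++ t) ->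
  homotopic (Nanoword proj (x ++ [:: A; B] ++ y ++ [:: C; A] ++ z ++ [:: B; C] ++ t))
            (Nanoword proj (x ++ [:: B; A] ++ y ++ [:: A; C] ++ z ++ [:: C; B] ++ t)).
Proof.
move=> [AB AC BC] hS g0.
have : B \notin x ++ y ++ z ++ t.
  by apply: gauss_word_notin g0 _; rewrite !count_cat /= eqxx; lia.
rewrite !mem_cat !negb_or => /and4P[Bx By Bz Bt].
have := move2_insert_pair proj (proj B) x ([:: A; B] ++ y ++ [:: C; A] ++ z ++ [:: B; C]) t.
have := move2_remove_pair (proj := proj) (p := proj B) (k := false) (P := inr true)
  (Q := inl B) (x ++ [:: B; A]) (y ++ [:: A; C] ++ z) ([:: C; B] ++ t)
  (permEl (perm_catC [:: inr true] [:: inl B])) (esym (tauK _)) erefl.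
have := move3_homotopic (pr := ext_proj proj (proj B)) (P := inl A) (Q := inr true)
  (R := inl C) (x := map inl x ++ [:: inr false]) (y := inl B :: map inl y)
  (z := map inl z ++ [:: inl B]) (t := inr false :: map inl t) _ hS.
rewrite !map_cat (map_relabel _ Bx) (map_relabel _ By) (map_relabel _ Bz) (map_relabel _ Bt).
rewrite -!catA /= -?catA /relabel eqxx (negbTE AB) [C == B]eq_sym (negbTE BC) => mv3 rem ins.
have g1 := (move2_gauss ins).2 g0.
apply: rst_trans; first exact: rst_sym (move2_homotopic ins g0).
apply: rst_trans; first exact: rst_sym (mv3 (And3 isT AC isT) g1).
exact: move2_homotopic rem (gauss_word_swap3 g0).
Qed.

Lemma move3_tauAB_homotopic (L : finType) (proj : L -> alpha) (A B C : L) (x y z t : seq L) :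
  [/\ A != B, A != C & B != C] -> S (tau (proj A)) (tau (proj B)) (proj C) ->
  gauss_word (x ++ [:: A; B] ++ y ++ [:: C; A] ++ z ++ [:: C; B] ++ t) ->
  homotopic (Nanoword proj (x ++ [:: A; B] ++ y ++ [:: C; A] ++ z ++ [:: C; B] ++ t))
            (Nanoword proj (x ++ [:: B; A] ++ y ++ [:: A; C] ++ z ++ [:: B; C] ++ t)).
Proof.
move=> [AB AC BC] hS g0.
have : A \notin x ++ y ++ z ++ t.
  by apply: gauss_word_notin g0 _; rewrite !count_cat /= eqxx; lia.
rewrite !mem_cat !negb_or => /and4P[Ax Ay Az At].
have := move2_insert_pair proj (tau (proj A)) (x ++ [:: A; B]) y ([:: C; A] ++ z ++ [:: C; B] ++ t).
have := move2_remove_pair (proj := proj) (p := tau (proj A)) (k := true) (P := inl A)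
  (Q := inr false) x ([:: B; A] ++ y ++ [:: A; C]) (z ++ [:: B; C] ++ t)
  (perm_refl _) erefl (tauK _).
have := fun g => move3_tauB_homotopic (proj := ext_proj proj (tau (proj A)))
  (A := inr false) (B := inl B) (C := inl C)
  (x := map inl x ++ [:: inl A]) (y := inr true :: map inl y ++ [:: inr true])
  (z := inl A :: map inl z) (t := map inl t) _ hS (gauss_word_swap3 g).
rewrite !map_cat (map_relabel _ Ax) (map_relabel _ Ay) (map_relabel _ Az) (map_relabel _ At).
rewrite -!catA /= -?catA /relabel eqxx [B == A]eq_sym [C == A]eq_sym (negbTE AB) (negbTE AC).
move=> mv3 rem ins.
have g1 := (move2_gauss ins).2 g0.
have h12 := mv3 (And3 isT isT BC) g1.
apply: rst_trans; first exact: rst_sym (move2_homotopic ins g0).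
apply: rst_trans; first exact: rst_sym h12.
exact: move2_homotopic rem ((move2_gauss rem).1 ((homotopic_nanoword h12).2 g1)).
Qed.

Lemma move3_tauBC_homotopic (L : finType) (proj : L -> alpha) (A B C : L) (x y z t : seq L) :
  [/\ A != B, A != C & B != C] -> S (proj A) (tau (proj B)) (tau (proj C)) ->
  gauss_word (x ++ [:: A; B] ++ y ++ [:: A; C] ++ z ++ [:: C; B] ++ t) ->
  homotopic (Nanoword proj (x ++ [:: A; B] ++ y ++ [:: A; C] ++ z ++ [:: C; B] ++ t))
            (Nanoword proj (x ++ [:: B; A] ++ y ++ [:: C; A] ++ z ++ [:: B; C] ++ t)).
Proof.
move=> [AB AC BC] hS g0.
have : C \notin x ++ y ++ z ++ t.
  by apply: gauss_word_notin g0 _; rewrite !count_cat /= eqxx; lia.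
rewrite !mem_cat !negb_or => /and4P[Cx Cy Cz Ct].
have := move2_insert_pair proj (proj C) (x ++ [:: A; B] ++ y) ([:: A; C] ++ z ++ [:: C; B]) t.
have := move2_remove_pair (proj := proj) (p := proj C) (k := false) (P := inr true) (Q := inl C)
  (x ++ [:: B; A] ++ y ++ [:: C; A]) z ([:: B; C] ++ t)
  (permEl (perm_catC [:: inr true] [:: inl C])) (esym (tauK _)) erefl.
have := move3_tauB_homotopic (proj := ext_proj proj (proj C)) (A := inl A) (B := inl B)
  (C := inr true) (x := map inl x) (y := map inl y ++ [:: inr false])
  (z := inl C :: map inl z ++ [:: inl C]) (t := inr false :: map inl t) _ hS.
rewrite !map_cat (map_relabel _ Cx) (map_relabel _ Cy) (map_relabel _ Cz) (map_relabel _ Ct).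
rewrite -!catA /= -?catA /relabel eqxx (negbTE AC) (negbTE BC) => mv3 rem ins.
have g1 := (move2_gauss ins).2 g0.
apply: rst_trans; first exact: rst_sym (move2_homotopic ins g0).
apply: rst_trans; first exact: mv3 (And3 AB isT isT) g1.
exact: move2_homotopic rem (gauss_word_swap3 g0).
Qed.

End Homotopy.

Theorem lemma3p1 (alpha : Type) (tau : alpha -> alpha) (Hinv : involutive tau)
  (S : alpha -> alpha -> alpha -> Prop)
  (L : finType) (proj : L -> alpha) (A B C : L)
  (x y z t : seq L) :
  [/\ A != B, A != C & B != C] ->
  (forall c, c \in x ++ y ++ z ++ t -> [/\ c != A, c != B & c != C]) ->
  (forall c, c != A -> c != B -> c != C -> count_mem c (x ++ y ++ z ++ t) = 2) ->
  [/\ S (proj A) (tau (proj B)) (proj C) ->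
        S_homotopic tau S
          (Nanoword proj (x ++ [:: A; B] ++ y ++ [:: C; A] ++ z ++ [:: B; C] ++ t))
          (Nanoword proj (x ++ [:: B; A] ++ y ++ [:: A; C] ++ z ++ [:: C; B] ++ t)),
      S (tau (proj A)) (tau (proj B)) (proj C) ->
        S_homotopic tau S
          (Nanoword proj (x ++ [:: A; B] ++ y ++ [:: C; A] ++ z ++ [:: C; B] ++ t))
          (Nanoword proj (x ++ [:: B; A] ++ y ++ [:: A; C] ++ z ++ [:: B; C] ++ t))
    & S (proj A) (tau (proj B)) (tau (proj C)) ->
        S_homotopic tau S
          (Nanoword proj (x ++ [:: A; B] ++ y ++ [:: A; C] ++ z ++ [:: C; B] ++ t))
          (Nanoword proj (x ++ [:: B; A] ++ y ++ [:: C; A] ++ z ++ [:: B; C] ++ t))].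
Proof.
move=> dABC hm hc.
split=> hS; [ apply: move3_tauB_homotopic | apply: move3_tauAB_homotopic
            | apply: move3_tauBC_homotopic ] => //;
  by apply: gauss_word_chords dABC hm hc _ => c; rewrite !count_cat /=; lia.
Qed.
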